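(* Let $M\ge4$ and let $g_n=e^{j2\pi\phi_n}$, $n=-2M,\dots,2M$, with $\phi_n\sim\mathcal{U}[0,1]$ i.i.d. Let $K_g(\tau)=\frac1M\sum_{n=-2M}^{2M}s_ng_ne^{j2\pi n\tau}$. There exist numerical constants $C_1,C_2,C_3$ such that, with probability at least $1-C_3(M^3\log M)^{-1/2}$, $$|K_g(\tau)|\le C_1\sqrt{\frac{\log M}{M}}\quad\text{and}\quad|K_g'(\tau)|\le C_2\sqrt{M\log M}\qquad\text{for all }\tau\in[0,1).$$
   Context: $j=\sqrt{-1}$. For $|n|\le2M$, $s_n=\frac1M\sum_{i=\max\{n-M,-M\}}^{\min\{n+M,M\}}(1-|i/M|)(1-|n/M-i/M|)$ (coefficients of the squared Fejér kernel; $|s_n|\le1$). $K_g'$ is the derivative in $\tau$. *)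

From HB Require Import structures.
From mathcomp Require Import all_boot all_order all_algebra.
From mathcomp Require Import all_classical all_reals all_analysis.
Unset Printing Implicit Defensive.
Import Order.TTheory GRing.Theory Num.Theory.
Import numFieldNormedType.Exports.
Local Open Scope classical_set_scope.
Local Open Scope ring_scope.

(* Index k : 'I_(4M+1) encodes n = k - 2M, n = -2M..2M. *)
Definition idx (M k : nat) : int := k%:Z - (2 * M)%:Z.

(* s_n = (1/M) sum_{i = max(n-M,-M)}^{min(n+M,M)} (1-|i/M|)(1-|n/M - i/M|).
   i ranges over -M..M (i = j - M, j < 2M+1) restricted to |n - i| <= M. *)
Definition fejer_s {R : realType} (M : nat) (n : int) : R :=
  M%:R^-1 * \sum_(j < (2 * M).+1 | `|n - (j%:Z - M%:Z)| <= M%:Z)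
     ((1 - `|(j%:Z - M%:Z)%:~R / M%:R|) *
      (1 - `|n%:~R / M%:R - (j%:Z - M%:Z)%:~R / M%:R|)).

(* Real and imaginary parts of
   K_g(tau) = (1/M) sum_n s_n e^{j 2 pi phi_n} e^{j 2 pi n tau}. *)
Definition K_re {R : realType} (M : nat) (phi : 'I_(4 * M).+1 -> R) (tau : R) : R :=
  M%:R^-1 * \sum_(k < (4 * M).+1)
     fejer_s M (idx M k) * cos (2 * pi * (phi k + (idx M k)%:~R * tau)).

Definition K_im {R : realType} (M : nat) (phi : 'I_(4 * M).+1 -> R) (tau : R) : R :=
  M%:R^-1 * \sum_(k < (4 * M).+1)
     fejer_s M (idx M k) * sin (2 * pi * (phi k + (idx M k)%:~R * tau)).

Definition K_abs {R : realType} (M : nat) (phi : 'I_(4 * M).+1 -> R) (tau : R) : R :=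
  Num.sqrt (K_re M phi tau ^+ 2 + K_im M phi tau ^+ 2).

Definition Kder_abs {R : realType} (M : nat) (phi : 'I_(4 * M).+1 -> R) (tau : R) : R :=
  Num.sqrt ((derive1 (K_re M phi) tau) ^+ 2 + (derive1 (K_im M phi) tau) ^+ 2).

Definition uniform01 {R : realType} {d : measure_display} {T : measurableType d}
  (P : probability T R) (X : T -> R) : Prop :=
  measurable_fun setT X /\
  forall A : set R, measurable A ->
    P (X @^-1` A) = (@lebesgue_measure R) (A `&` `[0%R, 1%R]).

Definition mutually_independent {R : realType} {d : measure_display}
  {T : measurableType d} {I : finType} (P : probability T R) (X : I -> T -> R) : Prop :=
  forall (S : {set I}) (A : I -> set R), (forall i, measurable (A i)) ->
    P (\bigcap_(i in [set i | i \in S]) (X i @^-1` A i)) =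
    (\prod_(i in S) P (X i @^-1` A i))%E.

From HB Require Import structures.
From mathcomp Require Import all_boot all_order all_algebra.
From mathcomp Require Import all_classical all_reals all_analysis.
From mathcomp Require Import ring lra zify.
Import Order.TTheory GRing.Theory Num.Theory.
Import numFieldNormedType.Exports.
Local Open Scope classical_set_scope.
Local Open Scope ring_scope.

(* Discretise. Round each phase down to the grid (1/L)Z with L = M^2: the event
   that the rounded phases form a given configuration v is a box of probability
   L^-(4M+1), so it suffices to count configurations. Call v good if, at every
   grid time j/L, the real and imaginary parts of K and K' computed from the
   rounded phases stay below thresholds of order sqrt(ln M / M), resp.
   M sqrt(ln M / M). At a fixed grid time each such part is a sum of independent
   bounded terms a_k cos(2 pi v_k / L + theta_k) with mean zero, because cosines
   at the L-th roots of unity sum to zero; a Chernoff bound shows that at most a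
   fraction M^-5 of the configurations exceed a threshold. A union bound over the
   8 one-sided tests and the M^2 grid times leaves a fraction 8 M^-3
   <= 8 / sqrt(M^3 ln M) of bad configurations. On a good box the bounds extend
   to all phases and all tau in [0,1): every term is Lipschitz, and the mesh
   M^-2 only adds O(1/M) to K and O(1) to K'. *)

Section trigonometry.
Context {R : realType}.

Lemma cos_lipschitz (x y : R) : `|cos x - cos y| <= `|x - y|.
Proof.
wlog yx : x y / y <= x.
  move=> H; case: (leP y x) => [/H//|/ltW/H]; by rewrite distrC [`|y - x|]distrC.
have [c _ ->] := @MVT_segment R cos (fun t => - sin t) y x yx
  (fun t _ => is_derive_cos t) (continuous_subspaceT (@continuous_cos R)).
by rewrite normrM ler_piMl // normrN sin_max.
Qed.

Definition grid_pt (L i : nat) : R := i%:R / L%:R.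

(* Telescoping: [2 sin h cos(x_i)] is a difference of sines at the midpoints
   [x_i +- h], [h = pi / L], and the last midpoint is the first one shifted by [2 pi]. *)
Lemma sum_cos_grid (L : nat) (th : R) : (2 <= L)%N ->
  \sum_(i < L) cos (2 * pi * grid_pt L i + th) = 0.
Proof.
move=> L2.
have L0 : (0 : R) < L%:R by rewrite ltr0n; case: L L2.
have L2' : (2 : R) <= L%:R by rewrite (ler_nat R 2 L).
pose h : R := pi / L%:R.
have hpos : 0 < h by rewrite divr_gt0 // pi_gt0.
have hlt : h < pi by rewrite /h ltr_pdivrMr //; have := pi_gt0 R; nra.
have s0 : 0 < sin h by apply: sin_gt0_pi; rewrite hpos hlt.
pose g (i : nat) := sin (th + (i%:R * 2 - 1) * h).
have telescope_term i : 2 * sin h * cos (2 * pi * grid_pt L i + th) = g i.+1 - g i.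
  rewrite /g /grid_pt.
  have -> : th + (i.+1%:R * 2 - 1) * h = (2 * pi * (i%:R / L%:R) + th) + h.
    by rewrite /h -natr1; field; lra.
  have -> : th + (i%:R * 2 - 1) * h = (2 * pi * (i%:R / L%:R) + th) - h.
    by rewrite /h; field; lra.
  rewrite sinD sinB; ring.
have : 2 * sin h * (\sum_(i < L) cos (2 * pi * grid_pt L i + th)) = 0.
  rewrite mulr_sumr (eq_bigr (fun i : 'I_L => g i.+1 - g i)); last by move=> i _.
  rewrite -(big_mkord xpredT (fun i => g i.+1 - g i)) telescope_sumr // /g.
  have -> : th + (L%:R * 2 - 1) * h = (th + (0%:R * 2 - 1) * h) + pi *+ 2.
    by rewrite /h mulr2n; field; lra.
  by rewrite sinD2pi subrr.
by move/eqP; rewrite mulf_eq0 mulf_eq0 pnatr_eq0 (gt_eqF s0) => /eqP.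
Qed.

Lemma expR_le_quadratic (x : R) : x <= 2^-1 -> expR x <= 1 + x + 2 * x ^+ 2.
Proof.
move=> hx.
have e1 : 1 - x <= expR (- x) by have := expR_ge1Dx (- x); lra.
have e2 : expR x * (1 - x) <= 1.
  by rewrite -[X in _ <= X](expRxMexpNx_1 x); apply: ler_wpM2l e1; exact: expR_ge0.
have e3 : 1 <= (1 + x + 2 * x ^+ 2) * (1 - x) by nra.
nra.
Qed.

Lemma is_derive_sum_cos n (x : R) (a b c : 'I_n -> R) :
  is_derive x 1 (fun t => \sum_(k < n) a k * cos (b k + c k * t))
    (\sum_(k < n) a k * (- sin (b k + c k * x) * c k)).
Proof.
have -> : (fun t => \sum_(k < n) a k * cos (b k + c k * t)) =
   \sum_(k < n) (fun t => a k * cos (b k + c k * t)).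
  by apply: funext => t; rewrite fct_sumE.
apply: is_derive_sum => k.
have lin : is_derive x 1 (fun t => b k + c k * t) (c k).
  by apply: is_derive_eq; rewrite add0r mul1r; exact: mulr1.
have : is_derive x 1 (cos \o (fun t => b k + c k * t)) (- sin (b k + c k * x) * c k).
  exact: is_derive1_comp.
exact: is_deriveZ.
Qed.

End trigonometry.

Section equispaced_chernoff.
Context {R : realType} (L : nat).
Hypothesis L2 : (2 <= L)%N.

(* [expR y <= 1 + y + 2 y^2] for [y <= 1/2], and the linear terms sum to zero
   by [sum_cos_grid]. *)
Lemma sum_expR_cos_grid_le (a th c lam : R) : `|a| <= c -> 0 <= lam -> lam * c <= 2^-1 ->
  \sum_(i < L) expR (lam * (a * cos (2 * pi * grid_pt L i + th)))
    <= L%:R * expR (2 * lam ^+ 2 * c ^+ 2).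
Proof.
move=> ha l0 lc.
apply: (@le_trans _ _ (\sum_(i < L) (1 + lam * a * cos (2 * pi * grid_pt L i + th)
      + 2 * (lam ^+ 2 * c ^+ 2)))).
  apply: ler_sum => i _.
  set y := lam * (a * cos _).
  have hy : `|y| <= lam * c.
    rewrite /y normrM ger0_norm // ler_wpM2l // normrM.
    by apply: le_trans (ler_wpM2l (normr_ge0 _) (cos_max _)) _; rewrite mulr1.
  have hy2 : y <= 2^-1 by have := ler_norm y; lra.
  apply: le_trans (expR_le_quadratic _ hy2) _.
  apply: lerD; first by rewrite /y mulrA.
  have h1 := ler_norm y; have h2 := ler_norm (- y); rewrite normrN in h2.
  nra.
rewrite !big_split /= -mulr_sumr sum_cos_grid // mulr0 addr0.
rewrite !sumr_const card_ord -mulrnDl -[_ *+ L]mulr_natl.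
by apply: ler_wpM2l; [exact: ler0n | rewrite mulrA; exact: expR_ge1Dx].
Qed.

Lemma count_sum_cos_grid_ge (I : finType) (a th : I -> R) (c lam t : R) :
  (forall k, `|a k| <= c) -> 0 <= lam -> lam * c <= 2^-1 ->
  \sum_(v : {ffun I -> 'I_L})
     (((t <= \sum_k a k * cos (2 * pi * grid_pt L (v k) + th k))%R : bool)%:R : R)
  <= L%:R ^+ #|I| * expR (- (lam * t) + #|I|%:R * (2 * lam ^+ 2 * c ^+ 2)).
Proof.
move=> ha l0 lc.
pose F k (i : 'I_L) := expR (lam * (a k * cos (2 * pi * grid_pt L i + th k))).
apply: (@le_trans _ _ (\sum_(v : {ffun I -> 'I_L}) expR (- (lam * t)) * \prod_k F k (v k))).
  apply: ler_sum => v _.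
  rewrite /F -expR_sum -expRD -mulr_sumr.
  case: (boolP (t <= _)) => h /=; last exact: expR_ge0.
  by rewrite -[X in X <= _]expR0 ler_expR addrC subr_ge0; exact: ler_wpM2l.
rewrite -mulr_sumr -bigA_distr_bigA /= expRD mulrCA.
apply: ler_wpM2l; first exact: expR_ge0.
rewrite expRM_natl -exprMn -[_ ^+ #|I|]prodr_const.
apply: ler_prod => k _; apply/andP; split.
  by apply: sumr_ge0 => i _; exact: expR_ge0.
exact: sum_expR_cos_grid_le.
Qed.

End equispaced_chernoff.

Section indicators.
Context {R : realDomainType}.

Lemma sum_indicatorC (T : finType) (p : pred T) :
  \sum_v (p v)%:R = #|T|%:R - \sum_v (~~ p v)%:R :> R.
Proof.
apply/eqP; rewrite eq_sym subr_eq -big_split /=.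
rewrite (eq_bigr (fun _ => 1)); last by move=> v _; case: (p v); rewrite /= ?addr0 ?add0r.
by rewrite sumr_const.
Qed.

Lemma indicator_norm_gt (g t : R) :
  (~~ (`|g| <= t)%R)%:R <= ((t <= g)%R : bool)%:R + ((t <= - g)%R : bool)%:R :> R.
Proof.
case: (boolP (`|g| <= t)) => h /=; first by rewrite addr_ge0.
have {}h : t < `|g| by rewrite ltNge.
case: (boolP (0 <= g)) => g0.
  by rewrite ger0_norm // in h; rewrite (ltW h) /= lerDl ler0n.
rewrite ler0_norm in h; last by rewrite ltW // ltNge.
by rewrite (ltW h) /= addrC lerDl ler0n.
Qed.

Lemma indicator_nand4 (a b c d : bool) :
  (~~ [&& a, b, c & d])%:R <= (~~ a)%:R + (~~ b)%:R + (~~ c)%:R + (~~ d)%:R :> R.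
Proof. by case: a; case: b; case: c; case: d => /=; lra. Qed.

Lemma indicator_nforall (I : finType) (p : pred I) :
  (~~ [forall j, p j])%:R <= \sum_j (~~ p j)%:R :> R.
Proof.
case: (boolP [forall j, p j]) => h /=; first by apply: sumr_ge0 => j _; exact: ler0n.
move/forallPn: h => [j hj].
by rewrite (bigD1 j) //= hj /= lerDl; apply: sumr_ge0 => i _; exact: ler0n.
Qed.

End indicators.

Lemma sqrt_sqr_addr_le {R : realType} (x y : R) : Num.sqrt (x ^+ 2 + y ^+ 2) <= `|x| + `|y|.
Proof.
rewrite -[X in _ <= X]ger0_norm ?addr_ge0 // -sqrtr_sqr ler_sqrt ?sqr_ge0 //.
rewrite -[x ^+ 2]real_normK ?num_real // -[y ^+ 2]real_normK ?num_real //.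
by have := normr_ge0 x; have := normr_ge0 y; nra.
Qed.

Section grid_cells.
Context {R : realType}.

Definition grid_cell (L i : nat) : set R := `[grid_pt L i, grid_pt L i.+1[.

Lemma grid_cell_inj (L i j : nat) (x : R) : (0 < L)%N ->
  grid_cell L i x -> grid_cell L j x -> i = j.
Proof.
move=> L0; rewrite /grid_cell /grid_pt /= !in_itv /= => /andP [h1 h2] /andP [h3 h4].
have iL : (0 : R) < L%:R^-1 by rewrite invr_gt0 ltr0n.
have := le_lt_trans h1 h4; have := le_lt_trans h3 h2.
rewrite !(ltr_pM2r iL) !ltr_nat !ltnS => ji ij.
by apply/eqP; rewrite eqn_leq ij ji.
Qed.

Lemma measurable_grid_cell L i : measurable (grid_cell L i).
Proof. exact: measurable_itv. Qed.

Lemma lebesgue_grid_cell L (i : 'I_L) :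
  (@lebesgue_measure R) (grid_cell L i `&` `[0%R, 1%R]) = (L%:R^-1)%:E.
Proof.
have L0 : (0 : R) < L%:R by rewrite ltr0n; case: i => i /=; case: L.
have sub : grid_cell L i `<=` `[0%R, 1%R].
  move=> x; rewrite /grid_cell /grid_pt /= !in_itv /= => /andP [h1 h2]; apply/andP; split.
    by apply: le_trans h1; rewrite divr_ge0.
  apply: (le_trans (ltW h2)); rewrite ler_pdivrMr // mul1r ler_nat; exact: ltn_ord.
rewrite setIidl // /grid_cell /grid_pt lebesgue_measure_itv /= lte_fin.
rewrite ltr_pM2r ?invr_gt0 // ltr_nat ltnSn.
by rewrite -EFinB -mulrBl -natrB // subSnn mul1r.
Qed.

Lemma grid_cell_dist {L i : nat} {x : R} :
  grid_cell L i x -> `|x - grid_pt L i| <= L%:R^-1.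
Proof.
rewrite /grid_cell /grid_pt /= in_itv /= -addn1 natrD mulrDl mul1r => /andP [x_ge x_lt].
by rewrite ger0_norm ?subr_ge0 //; lra.
Qed.

Lemma grid_cell_trunc {L : nat} {x : R} : (0 < L)%N -> 0 <= x < 1 ->
  exists j : 'I_L, grid_cell L j x.
Proof.
move=> L_gt0 /andP [x0 x1].
have Lp : (0 : R) < L%:R by rewrite ltr0n.
have r0 : 0 <= x * L%:R by rewrite mulr_ge0 // ltW.
have /andP [tr1 tr2] := truncn_itv r0.
have jL : (Num.trunc (x * L%:R) < L)%N.
  by rewrite -(ltr_nat R); apply: le_lt_trans tr1 _; rewrite -[X in _ < X]mul1r ltr_pM2r.
exists (Ordinal jL); rewrite /grid_cell /grid_pt /= in_itv /=.
by rewrite ler_pdivrMr // ltr_pdivlMr // tr1 tr2.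
Qed.

End grid_cells.

Section grid_boxes.
Context {R : realType} {d : measure_display} {T : measurableType d}.
Context (P : probability T R) {I : finType} (X : I -> T -> R) (L : nat).
Hypotheses (L0 : (0 < L)%N) (X_uniform : forall k, uniform01 P (X k))
  (X_indep : mutually_independent P X).

Definition grid_box (v : {ffun I -> 'I_L}) : set T :=
  \bigcap_(i in [set i | i \in [set: I]%SET]) (X i @^-1` grid_cell L (v i)).

Lemma measurable_grid_box v : measurable (grid_box v).
Proof.
apply: fin_bigcap_measurable; first exact: finite_finset.
move=> i _; have := (X_uniform i).1 measurableT _ (measurable_grid_cell L (v i)).
by rewrite setTI.
Qed.

Lemma prob_grid_box v : P (grid_box v) = ((L%:R^-1) ^+ #|I|)%:E.
Proof.
rewrite /grid_box (X_indep [set: I]%SET (fun i => grid_cell L (v i))); last first.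
  by move=> i; exact: measurable_grid_cell.
rewrite (eq_bigr (fun _ => (L%:R^-1)%:E)); last first.
  by move=> i _; rewrite (X_uniform i).2 ?lebesgue_grid_cell //; exact: measurable_grid_cell.
by rewrite prodEFin prodr_const cardsT.
Qed.

Lemma prob_bigcup_grid_box (good : pred {ffun I -> 'I_L}) :
  P (\bigcup_(v in [set v | good v]) grid_box v) =
  ((\sum_v (good v)%:R) * (L%:R^-1) ^+ #|I|)%:E.
Proof.
rewrite measure_fin_bigcup; last first.
- by move=> v _; exact: measurable_grid_box.
- move=> v v' _ _ [x [h1 h2]]; apply/ffunP => k; apply: val_inj.
  apply: (@grid_cell_inj R L _ _ (X k x)) => //.
    by apply: h1; rewrite /= inE.
  by apply: h2; rewrite /= inE.
- exact: finite_finset.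
rewrite (fsbigE [seq v <- enum {ffun I -> 'I_L} | good v]) /=.
- rewrite big_filter_cond.
  rewrite (eq_bigr (fun _ => ((L%:R^-1) ^+ #|I|)%:E)); last by move=> v _; exact: prob_grid_box.
  rewrite sumEFin big_mkcond big_enum /= mulr_suml; congr EFin; apply: eq_bigr => v _.
  case: ifPn => [/andP [-> _]|]; first by rewrite mul1r.
  move=> h; case gv : (good v); last by rewrite mul0r.
  by exfalso; move/negP: h; apply; rewrite gv /=; exact: mem_set.
- by apply: filter_uniq; exact: enum_uniq.
- by move=> v /=; rewrite mem_filter => /andP [].
- by move=> v /= gv; rewrite mem_filter gv mem_enum.
Qed.

End grid_boxes.

Lemma pi_le4 {R : realType} : (pi : R) <= 4.
Proof. have := @pihalf_lt2 R; lra. Qed.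

Section kernel.
Context {R : realType}.
Variable M : nat.
Local Notation n := (4 * M).+1.

Definition freq (k : 'I_n) : R := (idx M k)%:~R.
Definition coefK (k : 'I_n) : R := M%:R^-1 * fejer_s M (idx M k).
Definition coefD (k : 'I_n) : R := coefK k * (2 * pi * freq k).

(* Real and imaginary parts of [K] and of [K'] are all of this form, for
   coefficients [coefK] or [coefD] and phase shifts [0] or [-+ pi/2]. *)
Definition trig_sum (a : 'I_n -> R) (sh : R) (x : 'I_n -> R) (tau : R) : R :=
  \sum_k a k * cos (2 * pi * x k + (2 * pi * (freq k * tau) + sh)).

Lemma trig_sumN a sh x tau : trig_sum (fun k => - a k) sh x tau = - trig_sum a sh x tau.
Proof. by rewrite /trig_sum -sumrN; apply: eq_bigr => k _; rewrite mulNr. Qed.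

Lemma K_re_trig_sum phi tau : K_re M phi tau = trig_sum coefK 0 phi tau.
Proof.
rewrite /K_re /trig_sum mulr_sumr; apply: eq_bigr => k _.
by rewrite addr0 /coefK /freq mulrDr -[RHS]mulrA.
Qed.

Lemma K_im_trig_sum phi tau : K_im M phi tau = trig_sum coefK (- (pi / 2)) phi tau.
Proof.
rewrite /K_im /trig_sum mulr_sumr; apply: eq_bigr => k _.
by rewrite /coefK /freq addrA cosBpihalf mulrDr -[RHS]mulrA.
Qed.

Lemma derive1_K_re phi tau : derive1 (K_re M phi) tau = trig_sum coefD (pi / 2) phi tau.
Proof.
have -> : K_re M phi = (fun t => \sum_k coefK k * cos (2 * pi * phi k + (2 * pi * freq k) * t)).
  apply: funext => t; rewrite K_re_trig_sum /trig_sum; apply: eq_bigr => k _.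
  by rewrite addr0 mulrA.
rewrite derive1E (@derive_val _ _ _ _ _ _ _ (is_derive_sum_cos _ _ _ _ _)) /trig_sum.
apply: eq_bigr => k _; rewrite /coefD addrA cosDpihalf [2 * pi * (freq k * tau)]mulrA; ring.
Qed.

Lemma derive1_K_im phi tau : derive1 (K_im M phi) tau = trig_sum coefD 0 phi tau.
Proof.
have -> : K_im M phi =
    (fun t => \sum_k coefK k * cos ((2 * pi * phi k - pi / 2) + (2 * pi * freq k) * t)).
  apply: funext => t; rewrite K_im_trig_sum /trig_sum; apply: eq_bigr => k _.
  congr (_ * cos _); ring.
rewrite derive1E (@derive_val _ _ _ _ _ _ _ (is_derive_sum_cos _ _ _ _ _)) /trig_sum.
apply: eq_bigr => k _; rewrite /coefD addr0.
have -> : 2 * pi * phi k - pi / 2 + 2 * pi * freq k * tau =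
    (2 * pi * phi k + 2 * pi * (freq k * tau)) - pi / 2 by ring.
rewrite sinBpihalf opprK; ring.
Qed.

Lemma norm_freq_le k : `|freq k| <= 2 * M%:R.
Proof.
rewrite /freq -intr_norm -natrM -[(2 * M)%:R]/(((2 * M)%:Z)%:~R) ler_int /idx.
have := ltn_ord k; lia.
Qed.

Hypothesis M_gt0 : (0 < M)%N.

Let M_gt0R : (0 : R) < M%:R. Proof. by rewrite ltr0n. Qed.

Lemma norm_intr_divM_le1 (z : int) : `|z| <= M%:Z -> `|(z%:~R : R) / M%:R| <= 1.
Proof.
move=> hz; rewrite normrM normfV normr_nat ler_pdivrMr // mul1r -intr_norm.
by rewrite -[M%:R]/((M%:Z)%:~R) ler_int.
Qed.

(* Crude bound: each of the at most [2M+1] summands of [s_n] lies in [[0, 1]]. *)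
Lemma norm_fejer_s_le (z : int) : `|fejer_s M z : R| <= 3.
Proof.
rewrite /fejer_s normrM ger0_norm ?invr_ge0 ?ler0n //.
set S := \sum_(j < _ | _) _.
suff hS : `|S| <= (2 * M).+1%:R.
  apply: (le_trans (ler_wpM2l _ hS)); first by rewrite invr_ge0 ler0n.
  by rewrite ler_pdivrMl // -natrM ler_nat; lia.
apply: (le_trans (ler_norm_sum _ _ _)).
apply: (@le_trans _ _ (\sum_(j < (2 * M).+1) (1 : R))); last by rewrite sumr_const card_ord.
rewrite [X in _ <= X](bigID (fun j : 'I_(2 * M).+1 => `|z - (j%:Z - M%:Z)| <= M%:Z)) /=.
rewrite -[X in X <= _]addr0; apply: lerD; last exact: sumr_ge0.
apply: ler_sum => j hj.
have h1 : `|((j%:Z - M%:Z)%:~R : R) / M%:R| <= 1.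
  by apply: norm_intr_divM_le1; have := ltn_ord j; lia.
have h2 : `|(z%:~R : R) / M%:R - (j%:Z - M%:Z)%:~R / M%:R| <= 1.
  by rewrite -mulrBl -intrB; exact: norm_intr_divM_le1.
move: h1 h2 (normr_ge0 (((j%:Z - M%:Z)%:~R : R) / M%:R))
  (normr_ge0 ((z%:~R : R) / M%:R - (j%:Z - M%:Z)%:~R / M%:R)).
set p := `|_|; set q := `|_| => h1 h2 h3 h4.
rewrite normrM ger0_norm ?subr_ge0 // ger0_norm ?subr_ge0 //; nra.
Qed.

Lemma norm_coefK_le k : `|coefK k| <= 3 / M%:R.
Proof.
rewrite /coefK normrM ger0_norm ?invr_ge0 ?ler0n // mulrC ler_pM2r ?invr_gt0 //.
exact: norm_fejer_s_le.
Qed.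

Lemma norm_coefD_le k : `|coefD k| <= 48.
Proof.
rewrite /coefD normrM.
have h3 : `|2 * pi * freq k| <= 8 * (2 * M%:R).
  rewrite normrM ger0_norm; last by rewrite mulr_ge0 // pi_ge0.
  apply: ler_pM => //; [by rewrite mulr_ge0 // pi_ge0 | by have := @pi_le4 R; lra |].
  exact: norm_freq_le.
apply: (le_trans (ler_pM _ _ (norm_coefK_le k) h3)) => //.
by rewrite [X in X <= _](_ : _ = 48) //; field; rewrite gt_eqF.
Qed.

End kernel.

Section rate.
Context {R : realType}.
Variable M : nat.

Definition rate : R := Num.sqrt (ln M%:R / M%:R).

Hypothesis M_ge4 : (4 <= M)%N.

Let M_ge4R : (4 : R) <= M%:R. Proof. by rewrite (ler_nat R 4 M). Qed.
Let M_gt0R : (0 : R) < M%:R. Proof. exact: lt_le_trans M_ge4R. Qed.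
Let invM_le : M%:R^-1 <= 4^-1 :> R. Proof. by rewrite lef_pV2 ?posrE. Qed.

Lemma ln_nat_bounds : 3 / 4 <= ln (M%:R : R) /\ ln (M%:R : R) <= M%:R.
Proof.
split; last by apply/ltW/ln_sublinear.
have hi := invM_le; have hi0 : 0 < M%:R^-1 :> R by rewrite invr_gt0.
have := @le_ln1Dx R (M%:R^-1 - 1); rewrite [1 + _]addrC subrK lnV ?posrE // => h.
have := h ltac:(lra); lra.
Qed.

Lemma M_rate_sqr : M%:R * rate ^+ 2 = ln M%:R.
Proof.
have [l0 _] := ln_nat_bounds.
by rewrite /rate sqr_sqrtr ?divr_ge0 ?ler0n //; [field; rewrite gt_eqF | lra].
Qed.

Lemma rate_le1 : rate <= 1.
Proof.
have [_ lM] := ln_nat_bounds.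
by rewrite /rate -[X in _ <= X]sqrtr1 ler_sqrt // ler_pdivrMr // mul1r.
Qed.

Lemma invM_le_rate : M%:R^-1 <= rate.
Proof.
have [l0 _] := ln_nat_bounds; have Mu := M_rate_sqr; have hi := invM_le.
have u0 : 0 <= rate := sqrtr_ge0 _.
have hi0 : 0 < M%:R^-1 :> R by rewrite invr_gt0.
have mM : M%:R * M%:R^-1 = 1 :> R by rewrite mulfV // gt_eqF.
nra.
Qed.

Lemma M_rate_ge1 : 1 <= M%:R * rate.
Proof.
have := invM_le_rate; have M0 := M_gt0R.
have : M%:R * M%:R^-1 = 1 :> R by rewrite mulfV // gt_eqF.
nra.
Qed.

Lemma sqrt_M_ln : Num.sqrt (M%:R * ln M%:R) = M%:R * rate.
Proof.
rewrite -M_rate_sqr mulrA -expr2 sqrtrM ?sqr_ge0 // sqrtr_sqr ger0_norm ?ler0n //.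
by rewrite sqrtr_sqr ger0_norm // sqrtr_ge0.
Qed.

Lemma sqrt_cube_ln_bounds : 0 < Num.sqrt (M%:R ^+ 3 * ln (M%:R : R)) <= M%:R ^+ 3.
Proof.
have M4 := M_ge4R; have [l0 lM] := ln_nat_bounds.
have M3 : M%:R <= M%:R ^+ 3 :> R by rewrite -[X in X <= _]expr1 ler_eXn2l //; lra.
have M0 : (0 : R) < M%:R by lra.
rewrite sqrtr_gt0 mulr_gt0 ?exprn_gt0 //=; last lra.
rewrite -[X in _ <= X]ger0_norm ?exprn_ge0 ?ler0n //.
rewrite -sqrtr_sqr ler_sqrt ?sqr_ge0 // expr2 ler_pM2l ?exprn_gt0 //; lra.
Qed.

End rate.

Section grid_counting.
Context {R : realType}.
Variable M : nat.
Local Notation n := (4 * M).+1.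

Definition gridL : nat := (M ^ 2)%N.
Definition grid_phase (v : {ffun 'I_n -> 'I_gridL}) k : R := grid_pt gridL (v k).

Lemma trig_sum_lipschitz (a x x' : 'I_n -> R) (sh tau tau' c dx dt : R) :
  (forall k, `|a k| <= c) -> (forall k, `|x k - x' k| <= dx) -> `|tau - tau'| <= dt ->
  `|trig_sum M a sh x tau - trig_sum M a sh x' tau'|
    <= n%:R * (c * (8 * dx + 16 * M%:R * dt)).
Proof.
move=> ha hx ht.
have c0 : 0 <= c by apply: le_trans (ha ord0).
have dx0 : 0 <= dx by apply: le_trans (hx ord0).
have dt0 : 0 <= dt by apply: le_trans ht.
rewrite /trig_sum -sumrB; apply: (le_trans (ler_norm_sum _ _ _)).
rewrite [X in _ <= X](_ : _ = \sum_(k < n) (c * (8 * dx + 16 * M%:R * dt))); last first.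
  by rewrite sumr_const card_ord mulr_natl.
apply: ler_sum => k _; rewrite -mulrBr normrM.
apply: ler_pM => //; apply: (le_trans (cos_lipschitz _ _)).
have -> : 2 * pi * x k + (2 * pi * (freq M k * tau) + sh)
      - (2 * pi * x' k + (2 * pi * (freq M k * tau') + sh))
    = 2 * pi * (x k - x' k) + 2 * pi * freq M k * (tau - tau') by ring.
apply: (le_trans (ler_normD _ _)).
rewrite [`|2 * pi * (_ - _)|]normrM [`|2 * pi * freq M k * _|]normrM.
rewrite [`|2 * pi * freq M k|]normrM.
have p8 : `|2 * pi| <= 8 :> R.
  by rewrite ger0_norm ?mulr_ge0 ?pi_ge0 //; have := @pi_le4 R; lra.
have h1 : `|2 * pi| * `|x k - x' k| <= 8 * dx by apply: ler_pM.
have h2 : `|2 * pi| * `|freq M k| * `|tau - tau'| <= 8 * (2 * M%:R) * dt.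
  apply: ler_pM; [exact: mulr_ge0 | by [] | | exact: ht].
  by apply: ler_pM => //; exact: norm_freq_le.
lra.
Qed.

Definition threshK : R := 45 * rate M.
Definition threshD : R := 720 * (M%:R * rate M).
Definition tail_count : R := gridL%:R ^+ n / M%:R ^+ 5.

Hypothesis M_ge4 : (4 <= M)%N.

Let M_ge4R : (4 : R) <= M%:R. Proof. by rewrite (ler_nat R 4 M). Qed.
Let M_gt0R : (0 : R) < M%:R. Proof. exact: lt_le_trans M_ge4R. Qed.

(* Chernoff: [expR (- lam t + n * 2 lam^2 c^2) <= expR (- 15/2 ln M + 5/2 ln M) = M^-5]. *)
Lemma count_trig_sum_ge (a : 'I_n -> R) (sh tau c lam t : R) :
  (forall k, `|a k| <= c) -> 0 <= lam -> lam * c <= 2^-1 ->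
  lam * t = 15 / 2 * ln M%:R -> 2 * lam ^+ 2 * c ^+ 2 <= rate M ^+ 2 / 2 ->
  \sum_(v : {ffun 'I_n -> 'I_gridL}) (((t <= trig_sum M a sh (grid_phase v) tau)%R : bool)%:R : R)
    <= tail_count.
Proof.
move=> ha l0 lc lt lc2.
have L2 : (2 <= gridL)%N by rewrite /gridL (@leq_trans (4 ^ 2)) // leq_exp2r.
have := count_sum_cos_grid_ge _ L2 _ a (fun k => 2 * pi * (freq M k * tau) + sh) c lam t ha l0 lc.
rewrite card_ord => /le_trans; apply; apply: ler_wpM2l; first exact: exprn_ge0.
have n5 : n%:R <= 5 * M%:R :> R by rewrite -natrM ler_nat; lia.
have hX : - (lam * t) + n%:R * (2 * lam ^+ 2 * c ^+ 2) <= - (5%:R * ln M%:R).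
  have : n%:R * (2 * lam ^+ 2 * c ^+ 2) <= 5 * M%:R * (rate M ^+ 2 / 2).
    by apply: ler_pM => //; rewrite mulr_ge0 ?sqr_ge0 // mulr_ge0 // sqr_ge0.
  rewrite lt -(M_rate_sqr _ M_ge4); lra.
apply: (@le_trans _ _ (expR (- (5%:R * ln M%:R)))); first by rewrite ler_expR.
by rewrite expRN expRM_natl lnK // posrE.
Qed.

Lemma count_trig_sum_ge_threshK (a : 'I_n -> R) (sh tau : R) : (forall k, `|a k| <= 3 / M%:R) ->
  \sum_(v : {ffun 'I_n -> 'I_gridL}) (((threshK <= trig_sum M a sh (grid_phase v) tau)%R : bool)%:R : R)
    <= tail_count.
Proof.
move=> ha.
have Mu := @M_rate_sqr R M M_ge4; have u1 := @rate_le1 R M M_ge4.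
have u0 : 0 <= rate M :> R := sqrtr_ge0 _.
apply: (count_trig_sum_ge a sh tau (3 / M%:R) (M%:R * rate M / 6)) => //.
- by rewrite divr_ge0 // mulr_ge0 ?ler0n.
- rewrite [X in X <= _](_ : _ = rate M / 2); first lra.
  by field; rewrite gt_eqF.
- by rewrite /threshK -Mu; field.
- by rewrite [X in X <= _](_ : _ = rate M ^+ 2 / 2) //; field; rewrite gt_eqF.
Qed.

Lemma count_trig_sum_ge_threshD (a : 'I_n -> R) (sh tau : R) : (forall k, `|a k| <= 48) ->
  \sum_(v : {ffun 'I_n -> 'I_gridL}) (((threshD <= trig_sum M a sh (grid_phase v) tau)%R : bool)%:R : R)
    <= tail_count.
Proof.
move=> ha.
have Mu := @M_rate_sqr R M M_ge4; have u1 := @rate_le1 R M M_ge4.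
have u0 : 0 <= rate M :> R := sqrtr_ge0 _.
apply: (count_trig_sum_ge a sh tau 48 (rate M / 96)) => //.
- by rewrite divr_ge0.
- lra.
- by rewrite /threshD -Mu; field.
- by rewrite [X in X <= _](_ : _ = rate M ^+ 2 / 2) //; field.
Qed.

End grid_counting.

Section good_configurations.
Variables (R : realType) (M : nat).
Local Notation n := (4 * M).+1.
Local Notation L := (gridL M).

Definition good_config (v : {ffun 'I_n -> 'I_L}) : bool :=
  [forall j : 'I_L,
    [&& `|trig_sum M (coefK M) 0 (grid_phase M v) (grid_pt L j)| <= threshK M :> R,
        `|trig_sum M (coefK M) (- (pi / 2)) (grid_phase M v) (grid_pt L j)| <= threshK M :> R,
        `|trig_sum M (coefD M) (pi / 2) (grid_phase M v) (grid_pt L j)| <= threshD M :> R &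
        `|trig_sum M (coefD M) 0 (grid_phase M v) (grid_pt L j)| <= threshD M :> R]].

Hypothesis M_ge4 : (4 <= M)%N.

Let M_gt0 : (0 < M)%N. Proof. exact: leq_trans M_ge4. Qed.
Let M_ge4R : (4 : R) <= M%:R. Proof. by rewrite (ler_nat R 4 M). Qed.
Let M_gt0R : (0 : R) < M%:R. Proof. exact: lt_le_trans M_ge4R. Qed.

Lemma count_trig_sum_norm_gt (c t : R) :
  (forall (b : 'I_n -> R) (sh tau : R), (forall k, `|b k| <= c) ->
    \sum_(v : {ffun 'I_n -> 'I_L}) ((t <= trig_sum M b sh (grid_phase M v) tau)%R : bool)%:R
      <= tail_count M :> R) ->
  forall (a : 'I_n -> R) (sh tau : R), (forall k, `|a k| <= c) ->
  \sum_(v : {ffun 'I_n -> 'I_L}) (~~ (`|trig_sum M a sh (grid_phase M v) tau| <= t)%R)%:R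
    <= 2 * tail_count M :> R.
Proof.
move=> tail a sh tau ha.
apply: (le_trans (ler_sum _ (fun v _ => indicator_norm_gt _ _))).
rewrite big_split /= mulr2n mulrDl mul1r; apply: lerD; first exact: tail.
under eq_bigr do rewrite -trig_sumN.
by apply: tail => k; rewrite normrN.
Qed.

Lemma count_bad_configs :
  \sum_(v : {ffun 'I_n -> 'I_L}) (~~ good_config v)%:R <= L%:R * (8 * tail_count M) :> R.
Proof.
apply: (le_trans (ler_sum _ (fun v _ => indicator_nforall _ _))).
rewrite exchange_big /= [X in _ <= X](_ : _ = \sum_(j < L) 8 * tail_count M); last first.
  by rewrite sumr_const card_ord mulr_natl.
apply: ler_sum => j _.
apply: (le_trans (ler_sum _ (fun v _ => indicator_nand4 _ _ _ _))).
have cK sh := count_trig_sum_norm_gt _ _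
  (count_trig_sum_ge_threshK _ M_ge4) _ sh (grid_pt L j) (norm_coefK_le _ M_gt0).
have cD sh := count_trig_sum_norm_gt _ _
  (count_trig_sum_ge_threshD _ M_ge4) _ sh (grid_pt L j) (norm_coefD_le _ M_gt0).
rewrite !big_split /=.
have := cK 0; have := cK (- (pi / 2)); have := cD (pi / 2); have := cD 0.
lra.
Qed.

Lemma frac_bad_configs_le :
  (\sum_(v : {ffun 'I_n -> 'I_L}) (~~ good_config v)%:R) / L%:R ^+ n <= 8 / M%:R ^+ 3 :> R.
Proof.
have Lp : (0 : R) < L%:R by rewrite ltr0n expn_gt0 M_gt0.
apply: le_trans (ler_wpM2r _ count_bad_configs) _; first by rewrite invr_ge0 exprn_ge0 // ltW.
rewrite /tail_count natrX le_eqVlt; apply/orP; left; apply/eqP.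
by field; rewrite !expf_neq0 // gt_eqF.
Qed.

End good_configurations.

Lemma prob_good_configs {R : realType} (M : nat) (d : measure_display) (T : measurableType d)
    (P : probability T R) (phi : 'I_(4 * M).+1 -> T -> R) :
  (4 <= M)%N -> (forall k, uniform01 P (phi k)) -> mutually_independent P phi ->
  ((1 - 8 / Num.sqrt (M%:R ^+ 3 * ln M%:R))%:E <=
    P (\bigcup_(v in [set v | good_config R M v]) grid_box phi (gridL M) v))%E.
Proof.
move=> M_ge4 phi_uniform phi_indep.
have M0 : (0 : R) < M%:R by rewrite ltr0n (leq_trans _ M_ge4).
have L0 : (0 < gridL M)%N by rewrite expn_gt0 (leq_trans _ M_ge4).
rewrite prob_bigcup_grid_box // lee_fin sum_indicatorC card_ffun !card_ord natrX.
rewrite mulrBl exprVn mulfV ?expf_neq0 ?gt_eqF ?ltr0n //.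
have bad := frac_bad_configs_le R M M_ge4.
have /andP [s0 s3] := @sqrt_cube_ln_bounds R M M_ge4.
have : 8 / M%:R ^+ 3 <= 8 / Num.sqrt (M%:R ^+ 3 * ln M%:R) :> R.
  by rewrite ler_pM2l // lef_pV2 ?posrE ?exprn_gt0.
lra.
Qed.

Section deterministic_bound.
Context {R : realType}.
Variable M : nat.
Hypothesis M_ge4 : (4 <= M)%N.
Local Notation n := (4 * M).+1.
Local Notation L := (gridL M).

Let M_gt0 : (0 < M)%N. Proof. exact: leq_trans M_ge4. Qed.
Let M_ge4R : (4 : R) <= M%:R. Proof. by rewrite (ler_nat R 4 M). Qed.
Let M_gt0R : (0 : R) < M%:R. Proof. exact: lt_le_trans M_ge4R. Qed.

(* With mesh [1/L = M^-2], the Lipschitz error of [trig_sum] is [O(c)]. *)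
Lemma grid_error_le (c : R) : 0 <= c ->
  n%:R * (c * (8 * L%:R^-1 + 16 * M%:R * L%:R^-1)) <= 120 * c.
Proof.
move=> c0.
have -> : n%:R * (c * (8 * L%:R^-1 + 16 * M%:R * L%:R^-1)) =
    c * (64 + 48 / M%:R + 8 / M%:R ^+ 2).
  by rewrite natrX -addn1 natrD natrM; field; rewrite gt_eqF.
rewrite [120 * c]mulrC; apply: ler_wpM2l => //.
have hi : M%:R^-1 <= 4^-1 :> R by rewrite lef_pV2 ?posrE.
have hi0 : 0 < M%:R^-1 :> R by rewrite invr_gt0.
rewrite -exprVn; nra.
Qed.

Lemma trig_sum_near_grid (a phi : 'I_n -> R) (sh tau c t : R) v (j : 'I_L) :
  (forall k, `|a k| <= c) -> (forall k, `|phi k - grid_phase M v k| <= L%:R^-1) ->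
  `|tau - grid_pt L j| <= L%:R^-1 -> `|trig_sum M a sh (grid_phase M v) (grid_pt L j)| <= t ->
  `|trig_sum M a sh phi tau| <= t + 120 * c.
Proof.
move=> ha hphi htau hgrid.
have c0 : 0 <= c by apply: le_trans (ha ord0).
have := trig_sum_lipschitz M _ _ _ sh _ _ _ _ _ ha hphi htau; have := grid_error_le _ c0.
have := ler_normD (trig_sum M a sh phi tau - trig_sum M a sh (grid_phase M v) (grid_pt L j))
  (trig_sum M a sh (grid_phase M v) (grid_pt L j)).
rewrite subrK; lra.
Qed.

Lemma good_config_bounds (phi : 'I_n -> R) v : good_config R M v ->
  (forall k, grid_cell L (v k) (phi k)) -> forall tau : R, 0 <= tau < 1 ->
  K_abs M phi tau <= 810 * rate M /\ Kder_abs M phi tau <= 12960 * (M%:R * rate M).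
Proof.
move=> good phi_cell tau tau01.
have L0 : (0 < L)%N by rewrite expn_gt0 M_gt0.
have hphi k : `|phi k - grid_phase M v k| <= L%:R^-1 by exact: grid_cell_dist.
have [j tau_j] := grid_cell_trunc L0 tau01.
have htau := grid_cell_dist tau_j.
move/forallP: good => /(_ j) /and4P [g1 g2 g3 g4].
have near_K sh t := trig_sum_near_grid _ _ sh _ _ t _ _ (norm_coefK_le _ M_gt0) hphi htau.
have near_D sh t := trig_sum_near_grid _ _ sh _ _ t _ _ (norm_coefD_le _ M_gt0) hphi htau.
have := near_K _ _ g1; have := near_K _ _ g2; have := near_D _ _ g3; have := near_D _ _ g4.
have inv_le := @invM_le_rate R M M_ge4; have Mu := @M_rate_ge1 R M M_ge4.
rewrite /threshK /threshD => b1 b2 b3 b4; split.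
  by rewrite /K_abs K_re_trig_sum K_im_trig_sum; apply: le_trans (sqrt_sqr_addr_le _ _) _; lra.
by rewrite /Kder_abs derive1_K_re derive1_K_im; apply: le_trans (sqrt_sqr_addr_le _ _) _; lra.
Qed.

End deterministic_bound.

Theorem lemma9 (R : realType) :
  exists C1 C2 C3 : R,
  forall (M : nat), (4 <= M)%N ->
  forall (d : measure_display) (T : measurableType d) (P : probability T R)
         (phi : 'I_(4 * M).+1 -> T -> R),
    (forall k, uniform01 P (phi k)) ->
    mutually_independent P phi ->
    exists A : set T, measurable A /\
      (A `<=` [set w | forall tau : R, 0 <= tau < 1 ->
          K_abs M (fun k => phi k w) tau <= C1 * Num.sqrt (ln M%:R / M%:R) /\
          Kder_abs M (fun k => phi k w) tau <= C2 * Num.sqrt (M%:R * ln M%:R)]) /\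
      ((1 - C3 / Num.sqrt (M%:R ^+ 3 * ln M%:R))%:E <= P A)%E.
Proof.
exists 810, 12960, 8 => M M_ge4 d T P phi phi_uniform phi_indep.
exists (\bigcup_(v in [set v | good_config R M v]) grid_box phi (gridL M) v).
split.
  apply: fin_bigcup_measurable => [|v _]; first exact: finite_finset.
  exact: (measurable_grid_box P phi _ phi_uniform v).
split; last exact: prob_good_configs.
move=> w [v good w_box] tau tau01.
have phi_cell k : grid_cell (gridL M) (v k) (phi k w) by apply: w_box; rewrite /= inE.
rewrite sqrt_M_ln //; exact: good_config_bounds phi_cell tau tau01.
Qed.
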